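(* Let $\mathcal{G}^{\mathbb{c}}=(\mathbb{C},\mathbb{E}^{\mathbb{c}})$ be a C-DMG and $\mathbb{C}_\mathbb{X},\mathbb{C}_\mathbb{Y},\mathbb{C}_\mathbb{Z},\mathbb{C}_\mathbb{W}$ pairwise disjoint subsets of $\mathbb{C}$; for a compatible ADMG let $\mathbb{X},\mathbb{Y},\mathbb{Z},\mathbb{W}$ denote the unions of the clusters in $\mathbb{C}_\mathbb{X},\mathbb{C}_\mathbb{Y},\mathbb{C}_\mathbb{Z},\mathbb{C}_\mathbb{W}$ respectively. Assume that either (i) the sizes of the clusters are unknown (compatible ADMGs may have clusters of any nonempty sizes), or (ii) every cluster contains more than one variable. Then: (1) if $\mathbb{C}_\mathbb{Y}$ and $\mathbb{C}_\mathbb{X}$ are not d-separated by $\mathbb{C}_\mathbb{Z}\cup\mathbb{C}_\mathbb{W}$ in $\mathcal{G}^{\mathbb{c}}_{\overline{\mathbb{C}_\mathbb{Z}}}$, there exists a compatible ADMG $\mathcal{G}$ in which $\mathbb{Y}$ and $\mathbb{X}$ are not d-separated by $\mathbb{Z}\cup\mathbb{W}$ in $\mathcal{G}_{\overline{\mathbb{Z}}}$; (2) if $\mathbb{C}_\mathbb{Y}$ and $\mathbb{C}_\mathbb{X}$ are not d-separated by $\mathbb{C}_\mathbb{Z}\cup\mathbb{C}_\mathbb{W}$ in $\mathcal{G}^{\mathbb{c}}_{\overline{\mathbb{C}_\mathbb{Z}}\underline{\mathbb{C}_\mathbb{X}}}$, there exists a compatible ADMG $\mathcal{G}$ in which $\mathbb{Y}$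 and $\mathbb{X}$ are not d-separated by $\mathbb{Z}\cup\mathbb{W}$ in $\mathcal{G}_{\overline{\mathbb{Z}}\underline{\mathbb{X}}}$; (3) if $\mathbb{C}_\mathbb{Y}$ and $\mathbb{C}_\mathbb{X}$ are not d-separated by $\mathbb{C}_\mathbb{Z}\cup\mathbb{C}_\mathbb{W}$ in $\mathcal{G}^{\mathbb{c}}_{\overline{\mathbb{C}_\mathbb{Z}}\,\overline{\mathbb{C}_\mathbb{X}(\mathbb{C}_\mathbb{W})}}$, there exists a compatible ADMG $\mathcal{G}$ in which $\mathbb{Y}$ and $\mathbb{X}$ are not d-separated by $\mathbb{Z}\cup\mathbb{W}$ in $\mathcal{G}_{\overline{\mathbb{Z}}\,\overline{\mathbb{X}(\mathbb{W})}}$. That is, whenever one of the three do-calculus rules does not apply in $\mathcal{G}^{\mathbb{c}}$, there is a compatible ADMG in which the corresponding classical do-calculus rule does not apply.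
   Context: An ADMG is a graph with directed and bidirected edges whose directed edges form no directed cycle. A C-DMG $\mathcal{G}^{\mathbb{c}}=(\mathbb{C},\mathbb{E}^{\mathbb{c}})$ compatible with an ADMG $\mathcal{G}=(\mathbb{V},\mathbb{E})$ has as vertex set a partition $\mathbb{C}$ of $\mathbb{V}$ into clusters, with $C_i\rightarrow C_j$ (resp. $C_i\leftrightarrow C_j$), possibly $i=j$, an edge iff some $X\in C_i$, $Y\in C_j$ have $X\rightarrow Y$ (resp. $X\leftrightarrow Y$) in $\mathcal{G}$; C-DMGs may have directed cycles and self-loops. For a graph $\mathcal{G}^*$ and vertex sets $\mathbb{A},\mathbb{B}$, $\mathcal{G}^*_{\overline{\mathbb{A}}\underline{\mathbb{B}}}$ is obtained by removing all edges coming into $\mathbb{A}$ (directed edges with head in $\mathbb{A}$ and bidirected edges with an endpoint in $\mathbb{A}$) and all directed edges going out of $\mathbb{B}$. $\mathbb{C}_\mathbb{X}(\mathbb{C}_\mathbb{W})$ is the set of vertices of $\mathbb{C}_\mathbb{X}$ that are not ancestors of any vertex of $\mathbb{C}_\mathbb{W}$ in $\mathcal{G}^{\mathbb{c}}_{\overline{\mathbb{C}_\mathbb{Z}}}$; similarly $\mathbb{X}(\mathbb{W})$ is the set of vertices of $\mathbb{X}$ that are not ancestors of any vertex of $\mathbb{W}$ in $\mathcal{G}_{\overline{\mathbb{Z}}}$. Ancestors/descendants include the vertex itself. A walk $\langle V_1,\dots,V_n\rangle$ is blocked by $\mathbb{W}^*$ if $V_1\in\mathbb{W}^*$ or $V_n\in\mathbb{W}^*$;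 or for some $1<i<n$ the walk contains $V_{i-1}\,*\!-\!*\,V_i\rightarrow V_{i+1}$ or $V_{i-1}\leftarrow V_i\,*\!-\!*\,V_{i+1}$ (any edge type for $*\!-\!*$) with $V_i\in\mathbb{W}^*$; or for some $1<i<n$ it contains $V_{i-1}\,*\!\!\rightarrow V_i\leftarrow\!\!*\,V_{i+1}$ (edges directed into $V_i$ or bidirected) with no descendant of $V_i$ in $\mathbb{W}^*$. A path is a walk without repeated vertices; $\mathbb{W}^*$ d-separates $\mathbb{X}^*$ and $\mathbb{Y}^*$ if it blocks every path between a vertex of $\mathbb{X}^*$ and a vertex of $\mathbb{Y}^*$. *)

From mathcomp Require Import all_boot.
Set Implicit Arguments. Unset Strict Implicit. Unset Printing Implicit Defensive.

(* A mixed graph: [de x y] means x -> y, [bi x y] means x <-> y. *)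
Record mgraph (T : finType) := MGraph { de : rel T; bi : rel T }.

(* Kinds of edges traversed by a walk, from the current vertex u to the next v:
   Fwd : u -> v,  Bwd : u <- v,  Bid : u <-> v. *)
Inductive ekind := Fwd | Bwd | Bid.

Definition is_fwd k := if k is Fwd then true else false.
Definition is_bwd k := if k is Bwd then true else false.
Definition head_at_end k := match k with Fwd | Bid => true | Bwd => false end.
Definition head_at_start k := match k with Bwd | Bid => true | Fwd => false end.

Section Graphs.
Variable T : finType.

Definition is_ADMG (G : mgraph T) : Prop :=
  (forall x y, bi G x y = bi G y x) /\
  (forall x, ~~ bi G x x) /\
  (forall x y, de G x y -> ~~ connect (de G) y x).

(* G_{\overline{A} \underline{B}} : remove edges coming into A
   (directed with head in A, bidirected with an endpoint in A)
   and directed edges going out of B. *)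
Definition mutilate (G : mgraph T) (A B : {set T}) : mgraph T :=
  MGraph (fun x y => [&& de G x y, y \notin A & x \notin B])
         (fun x y => [&& bi G x y, x \notin A & y \notin A]).

(* ancestors / descendants include the vertex itself: connect is reflexive *)
Definition anc (G : mgraph T) (x y : T) : bool := connect (de G) x y.

(* X(W): vertices of X that are not ancestors of any vertex of W in G_{\overline Z} *)
Definition nonanc (G : mgraph T) (Z X W : {set T}) : {set T} :=
  [set x in X | [forall w in W, ~~ anc (mutilate G Z set0) x w]].

(* A walk is a start vertex u and a sequence of steps (kind, next vertex). *)
Definition step_ok (G : mgraph T) (u : T) (e : ekind * T) : bool :=
  match e.1 with
  | Fwd => de G u e.2
  | Bwd => de G e.2 u
  | Bid => bi G u e.2
  end.

Fixpoint walk_ok (G : mgraph T) (u : T) (s : seq (ekind * T)) : bool :=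
  match s with
  | [::] => true
  | e :: s' => step_ok G u e && walk_ok G e.2 s'
  end.

Definition walk_verts (u : T) (s : seq (ekind * T)) : seq T := u :: map snd s.

Definition is_path (G : mgraph T) (u : T) (s : seq (ekind * T)) : bool :=
  walk_ok G u s && uniq (walk_verts u s).

(* The walk <V_1,...,V_n> (V_1 = u, n = size s + 1) is blocked by W. *)
Definition blocked (G : mgraph T) (W : {set T}) (u : T) (s : seq (ekind * T)) : Prop :=
  let vs := walk_verts u s in
  let ks := map fst s in
  u \in W \/ last u (map snd s) \in W \/
  exists i, (0 < i < size s)%N /\
    let vi := nth u vs i in
    let k1 := nth Bid ks i.-1 in   (* edge between V_{i-1} and V_i *)
    let k2 := nth Bid ks i in      (* edge between V_i and V_{i+1} *)
    (* non-collider: V_{i-1} *-* V_i -> V_{i+1}  or  V_{i-1} <- V_i *-* V_{i+1} *)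
    (((is_fwd k2 || is_bwd k1) /\ vi \in W) \/
    (* collider: V_{i-1} *-> V_i <-* V_{i+1} with no descendant of V_i in W *)
     ((head_at_end k1 && head_at_start k2) /\
      forall w, anc G vi w -> w \notin W)).

Definition dsep (G : mgraph T) (W X Y : {set T}) : Prop :=
  forall x s, x \in X -> last x (map snd s) \in Y -> is_path G x s -> blocked G W x s.

End Graphs.

Definition clus (C V : finType) (cl : V -> C) (CA : {set C}) : {set V} :=
  [set v | cl v \in CA].

(* G^c is compatible with the ADMG G on V whose partition into clusters is
   given by cl : V -> C (every cluster nonempty). *)
Definition compatible (C V : finType) (Gc : mgraph C) (cl : V -> C) (G : mgraph V) : Prop :=
  is_ADMG G /\
  (forall c, exists v, cl v = c) /\
  (forall ci cj, de Gc ci cj <-> exists x y, [/\ cl x = ci, cl y = cj & de G x y]) /\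
  (forall ci cj, bi Gc ci cj <-> exists x y, [/\ cl x = ci, cl y = cj & bi G x y]).

Definition is_CDMG (C : finType) (Gc : mgraph C) : Prop :=
  exists (V : finType) (cl : V -> C) (G : mgraph V), compatible Gc cl G.

(* Assumptions on cluster sizes:
   (i) Unknown : compatible ADMGs may have clusters of any nonempty sizes;
   (ii) Known sz : the cluster sizes are sz c, each > 1. *)
Inductive regime (C : finType) := Unknown | Known of (C -> nat).

Definition regime_ok (C : finType) (r : regime C) : Prop :=
  match r with Unknown => True | Known sz => forall c, (1 < sz c)%N end.

Definition sizes_match (C V : finType) (r : regime C) (cl : V -> C) : Prop :=
  match r with
  | Unknown => True
  | Known sz => forall c, #|[set v | cl v == c]| = sz c
  end.

From mathcomp Require Import all_boot zify.
From Stdlib Require Import Classical_Prop.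
Set Implicit Arguments. Unset Strict Implicit. Unset Printing Implicit Defensive.

(* Take a path p between C_Y and C_X that is not blocked in the mutilated
   cluster graph, and blow every cluster c up into a main copy (c, 0) and
   auxiliary copies (c, i), i > 0 (hence clusters of size at least 2).
   Main-to-main edges copy the cluster edges that increase a numbering rmain
   which increases along the directed steps of p (one exists because p has no
   repeated vertex), so p lifts to the main copies.  Main-to-auxiliary edges
   copy every cluster edge, and auxiliary-to-auxiliary edges copy the cluster
   edges that decrease a distance raux to the conditioning set; thus a collider
   of p with a descendant in the conditioning set keeps one in the blow-up, and
   the lift of p stays unblocked.  Ranking main copies below auxiliary ones
   makes the blow-up acyclic, and bidirected edges between all distinct copies
   make it compatible.  For rule 3 the same descent shows that X(W) is exactly
   the union of the clusters of C_X(C_W). *)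

Lemma connect_homo (T T' : finType) (e : rel T) (e' : rel T') (f : T -> T') :
  {homo f : x y / e x y >-> e' x y} -> {homo f : x y / connect e x y >-> connect e' x y}.
Proof.
move=> fe x _ /connectP [p ep ->]; apply/connectP.
by exists (map f p); [exact: homo_path ep | rewrite last_map].
Qed.

Lemma potential_acyclic (T : finType) (e : rel T) (h : T -> nat) :
  {homo h : x y / e x y >-> x < y} -> forall x y, e x y -> ~~ connect e y x.
Proof.
move=> hP x y exy; apply/negP => /connectP [p yp px].
have : h y <= h (last y p).
  elim: p y yp {px exy} => //= z p IH y /andP [eyz /IH].
  exact/leq_trans/ltnW/hP.
by rewrite -px leqNgt hP.
Qed.

Section Walks.
Variable T : finType.

Lemma dconnecting_path (G : mgraph T) (W X Y : {set T}) : ~ dsep G W X Y ->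
  exists x s, [/\ x \in X, last x (map snd s) \in Y, is_path G x s & ~ blocked G W x s].
Proof.
move=> nsep; apply: NNPP => npath; apply: nsep => x s xX sY ps.
by apply: NNPP => nb; apply: npath; exists x, s.
Qed.

Fixpoint oriented (h : T -> nat) (u : T) (s : seq (ekind * T)) : bool :=
  if s is (k, v) :: s' then
    match k with Fwd => h u < h v | Bwd => h v < h u | Bid => true end && oriented h v s'
  else true.

Lemma eq_in_oriented (h h' : T -> nat) u s :
  {in walk_verts u s, h =1 h'} -> oriented h u s = oriented h' u s.
Proof.
elim: s u => //= -[k v] s IH u hh'.
rewrite !hh' ?(mem_head, inE, eqxx, orbT) // IH // => c cs.
by apply: hh'; rewrite inE cs orbT.
Qed.

Lemma oriented_succ (h : T -> nat) u s : oriented (fun c => (h c).+1) u s = oriented h u s.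
Proof. by elim: s u => //= -[k v] s IH u; rewrite IH. Qed.

Lemma uniq_walk_oriented u s : uniq (walk_verts u s) -> exists h, oriented h u s.
Proof.
elim: s u => [|[k v] s IH] u; first by exists (fun=> 0).
rewrite /walk_verts /= => /andP [uNvs /IH [h hs]].
exists (fun c => if c == u then (if k is Bwd then (h v).+2 else 0) else (h c).+1).
rewrite /= eqxx ifN; last by apply: contraNneq uNvs => <-; rewrite mem_head.
apply/andP; split; first by case: k.
rewrite (eq_in_oriented (h' := fun c => (h c).+1)) ?oriented_succ // => c cs.
by rewrite ifN //; apply: contraNneq uNvs => <-.
Qed.

End Walks.

Section DescentRank.
Variables (T : finType) (e : rel T) (S : {set T}).

Definition reaches (c : T) := [exists t in S, connect e c t].

Definition descent_rank (rk : T -> nat) := forall c, reaches c -> c \notin S ->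
  exists2 d, e c d & reaches d /\ rk d < rk c.

Lemma exists_descent_rank : exists rk, descent_rank rk.
Proof.
pose reaches_in n c := [exists p : n.-tuple T, path e c p && (last c p \in S)].
have reaches_inP c : reaches c -> exists n, reaches_in n c.
  case/exists_inP => t tS /connectP [p cp tE]; exists (size p).
  by apply/existsP; exists (in_tuple p); rewrite cp -tE tS.
have rkP c : exists n, ~~ reaches c || reaches_in n c.
  by case rc: (reaches c); [have [n ?] := reaches_inP c rc; exists n; apply/orP; right | exists 0].
exists (fun c => ex_minn (rkP c)) => c rc cNS.
case: ex_minnP => n; rewrite rc /= => /existsP [[[|d q] /= /eqP qn]].
  by rewrite (negbTE cNS).
case/andP=> /andP [ecd dq] qS nmin; exists d => //; split.
  by apply/exists_inP; exists (last d q) => //; apply/connectP; exists q.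
case: ex_minnP => m _ mmin; rewrite -qn ltnS; apply: mmin.
by apply/orP; right; apply/existsP; exists (in_tuple q); rewrite dq qS.
Qed.

End DescentRank.

Lemma clus_set0 (C V : finType) (cl : V -> C) : clus cl set0 = set0.
Proof. by apply/setP => v; rewrite !inE. Qed.

Lemma clus_setU (C V : finType) (cl : V -> C) (A B : {set C}) :
  clus cl (A :|: B) = clus cl A :|: clus cl B.
Proof. by apply/setP => v; rewrite !inE. Qed.

Lemma CDMG_bi_sym (C : finType) (Gc : mgraph C) : is_CDMG Gc -> symmetric (bi Gc).
Proof.
case=> V [cl [G [[G_bi_sym _] [_ [_ Gc_bi]]]]].
suff bi_imp a b : bi Gc a b -> bi Gc b a by move=> a b; apply/idP/idP; apply: bi_imp.
by case/Gc_bi => x [y [<- <- xy]]; apply/Gc_bi; exists y, x; rewrite G_bi_sym.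
Qed.

Section Blowup.
Variables (C : finType) (Gc : mgraph C) (sz : C -> nat) (rmain raux : C -> nat).

Local Notation V := {c : C & 'I_(sz c)}.

Definition is_main (v : V) := tagged v == 0 :> nat.

Definition blowup : mgraph V := MGraph
  (fun u v => de Gc (tag u) (tag v) &&
     [|| is_main u && ~~ is_main v,
         [&& is_main u, is_main v & rmain (tag u) < rmain (tag v)]
       | [&& ~~ is_main u, ~~ is_main v & raux (tag v) < raux (tag u)]])
  (fun u v => bi Gc (tag u) (tag v) && (u != v)).

Lemma blowup_acyclic (u v : V) : de blowup u v -> ~~ connect (de blowup) v u.
Proof.
pose M := (\max_c (rmain c + raux c)).+1.
have boundM c : rmain c + raux c < M by rewrite ltnS (leq_bigmax_cond c).
pose height (v : V) := if is_main v then rmain (tag v) else M + (M - raux (tag v)).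
apply: (@potential_acyclic _ _ height) => {}u {}v /andP [_].
have := boundM (tag u); have := boundM (tag v); rewrite /height.
case: (is_main u); case: (is_main v); rewrite /= ?andbF ?orbF //; lia.
Qed.

Lemma card_blowup_cluster c : #|[set v : V | tag v == c]| = sz c.
Proof.
have inj : injective (Tagged (fun c => 'I_(sz c)) (i := c)).
  by move=> i j /eqP; rewrite eq_Tagged => /eqP.
rewrite -[RHS](card_ord (sz c)) -cardsT -(card_imset _ inj).
congr #|pred_of_set _|; apply/setP => -[c' i]; rewrite !inE /=.
by apply/eqP/imsetP => [<-|[j _ /(congr1 tag)] //]; exists i.
Qed.

Hypothesis Gc_bi_sym : symmetric (bi Gc).
Hypothesis sz_gt1 : forall c, 1 < sz c.

Definition main c : V := Tagged _ (Ordinal (ltnW (sz_gt1 c))).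
Definition aux c : V := Tagged _ (Ordinal (sz_gt1 c)).

Lemma main_inj : injective main.
Proof. by move=> a b /(congr1 tag). Qed.

Lemma blowup_compatible : compatible Gc tag blowup.
Proof.
split; last split; last split.
- split; last split.
  + by move=> x y; rewrite /= Gc_bi_sym eq_sym.
  + by move=> x; rewrite /= eqxx andbF.
  + exact: blowup_acyclic.
- by move=> c; exists (main c).
- move=> ci cj; split => [cij|[x [y [<- <- /andP []]]] //].
  by exists (main ci), (aux cj); rewrite /= cij.
- move=> ci cj; split => [cij|[x [y [<- <- /andP []]]] //].
  case: (eqVneq ci cj) cij => [<-|neq] cij.
    by exists (main ci), (aux ci); rewrite /= cij; split => //; apply/eqP => /(congr1 is_main).
  exists (main ci), (main cj); rewrite /= cij; split => //.
  by apply: contra_neq neq => /main_inj.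
Qed.

End Blowup.

Section Lifting.
Variables (C : finType) (Gc : mgraph C) (sz : C -> nat) (sz_gt1 : forall c, 1 < sz c).
Variables (rmain raux : C -> nat) (A B S : {set C}).

Local Notation V := {c : C & 'I_(sz c)}.
Local Notation Gm := (mutilate Gc A B).
Local Notation Gv := (mutilate (blowup Gc sz rmain raux) (clus tag A) (clus tag B)).
Local Notation main := (main sz_gt1).
Local Notation aux := (aux sz_gt1).

Hypothesis raux_descent : descent_rank (de Gm) S raux.

Lemma reaches_blowup (v : V) : reaches (de Gm) S (tag v) ->
  exists u, [/\ connect (de Gv) v u, tag u \in S & tag u = tag v \/ tag u \notin A].
Proof.
have [n] := ubnP (raux (tag v)); elim: n v => // n IH v lt_n reach_v.
have [vS|vNS] := boolP (tag v \in S); first by exists v; split => //; left.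
have [d /and3P [vd dNA vNB] [reach_d lt_d]] := raux_descent reach_v vNS.
have lt_dn : raux (tag (aux d)) < n by rewrite -ltnS (leq_trans _ lt_n).
have [u [du uS uA]] := IH (aux d) lt_dn reach_d.
exists u; split => //; last by right; case: uA => [->|].
apply: connect_trans du; apply: connect1.
by rewrite /= !inE dNA vNB vd lt_d /= !andbT orbC; case: (is_main v).
Qed.

Definition lift_walk (s : seq (ekind * C)) : seq (ekind * V) := [seq (e.1, main e.2) | e <- s].

Lemma lift_walk_kinds s : map fst (lift_walk s) = map fst s.
Proof. by rewrite -map_comp. Qed.

Lemma lift_walk_targets s : map snd (lift_walk s) = map main (map snd s).
Proof. by rewrite -!map_comp. Qed.

Lemma lift_walk_verts x s : walk_verts (main x) (lift_walk s) = map main (walk_verts x s).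
Proof. by rewrite /walk_verts lift_walk_targets. Qed.

Lemma lift_walk_ok x s : uniq (walk_verts x s) -> walk_ok Gm x s -> oriented rmain x s ->
  walk_ok Gv (main x) (lift_walk s).
Proof.
elim: s x => [|[k v] s IH] x //=; rewrite /walk_verts /=.
move=> /andP [xNvs vs] /andP [xv sv] /andP [kv ks]; rewrite IH // andbT.
have xNv : x != v by apply: contraNneq xNvs => ->; rewrite mem_head.
move: xv kv; rewrite /step_ok /=; case: k => /= /and3P [Gxv vNA xNB] kv;
  rewrite !inE /= Gxv vNA xNB ?kv //=.
by rewrite andbT (inj_eq (@main_inj _ _ sz_gt1)).
Qed.

Lemma lift_blocked x s : blocked Gv (clus tag S) (main x) (lift_walk s) -> blocked Gm S x s.
Proof.
rewrite /blocked lift_walk_verts lift_walk_kinds lift_walk_targets size_map last_map !inE.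
case=> [xS|[lastS|[i [lt_i block_i]]]]; [by left | by right; left |].
right; right; exists i; split => //.
rewrite (nth_map x) ?inE /= in block_i; last by rewrite /walk_verts /= size_map; lia.
case: block_i => [|[collider noS]]; first by left.
right; split => // w anc_w; apply/negP => wS.
have [|u [vu uS _]] := reaches_blowup (v := main (nth x (walk_verts x s) i)).
  by apply/exists_inP; exists w.
by have := noS u vu; rewrite inE uS.
Qed.

Lemma lift_dconnected (CY CX : {set C}) x s :
  x \in CY -> last x (map snd s) \in CX -> is_path Gm x s -> oriented rmain x s ->
  ~ blocked Gm S x s -> ~ dsep Gv (clus tag S) (clus tag CY) (clus tag CX).
Proof.
move=> xY lastX /andP [ws us] os nblock sep; apply/nblock/lift_blocked/sep.
- by rewrite inE.
- by rewrite lift_walk_targets last_map inE.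
- by rewrite /is_path lift_walk_verts (map_inj_uniq (@main_inj _ _ sz_gt1)) us lift_walk_ok.
Qed.

End Lifting.

Lemma anc_mutilate_nonanc (T : finType) (G : mgraph T) (Z X W : {set T}) x w :
  w \in W -> anc (mutilate G Z set0) x w -> anc (mutilate G (Z :|: nonanc G Z X W) set0) x w.
Proof.
rewrite /anc => wW /connectP [p xp wE]; rewrite {w}wE in wW *.
elim: p x xp wW => [|y p IH] x /=; first by rewrite connect0.
case/andP => xy yp wW; apply: connect_trans (connect1 _) (IH _ yp wW).
move: xy => /and3P [Gxy yNZ _]; rewrite /= Gxy !inE (negbTE yNZ) /= andbT.
apply/nandP; right; apply/forall_inP => /(_ _ wW) /negP; apply.
by apply/connectP; exists p.
Qed.

Lemma nonanc_blowup (C : finType) (Gc : mgraph C) (sz : C -> nat) (sz_gt1 : forall c, 1 < sz c)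
    (rmain raux : C -> nat) (CX CZ CW : {set C}) :
  descent_rank (de (mutilate Gc (CZ :|: nonanc Gc CZ CX CW) set0)) (CZ :|: CW) raux ->
  [disjoint CX & CZ] -> [disjoint CX & CW] ->
  nonanc (blowup Gc sz rmain raux) (clus tag CZ) (clus tag CX) (clus tag CW)
  = clus tag (nonanc Gc CZ CX CW).
Proof.
move=> raux_descent dXZ dXW; apply/setP => v; rewrite /nonanc !inE.
case vX: (tag v \in CX) => //=; apply/forall_inP/forall_inP => nanc w wW.
- apply/negP => /(anc_mutilate_nonanc CX wW) anc_vw.
  have [|u [vu uZW uv]] := reaches_blowup sz_gt1 rmain raux_descent (v := v).
    by apply/exists_inP; exists w; rewrite // inE wW orbT.
  have uW : tag u \in CW.
    case: uv uZW => [->|]; first by rewrite inE (disjointFr dXZ vX) (disjointFr dXW vX).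
    by rewrite !inE negb_or => /andP [uNZ _]; rewrite (negbTE uNZ).
  have := nanc u; rewrite inE => /(_ uW) /negP; apply.
  apply: connect_sub vu => a b /and3P [ab bNA _]; apply/connect1/and3P; split; rewrite ?inE //.
  by move: bNA; rewrite !inE negb_or => /andP [].
- apply/negP; rewrite /anc inE in wW * => vw; move: (nanc _ wW) => /negP; apply.
  move: vw; apply: connect_homo => a b /and3P [/andP [ab _] bNZ _].
  by apply/and3P; split; rewrite ?inE in bNZ *.
Qed.

Lemma blowup_dconnected (C : finType) (Gc : mgraph C) (sz : C -> nat)
    (sz_gt1 : forall c, 1 < sz c) (A B S CY CX : {set C}) :
  ~ dsep (mutilate Gc A B) S CY CX ->
  exists rmain raux, descent_rank (de (mutilate Gc A B)) S raux /\
    ~ dsep (mutilate (blowup Gc sz rmain raux) (clus tag A) (clus tag B))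
           (clus tag S) (clus tag CY) (clus tag CX).
Proof.
move=> /dconnecting_path [x [s [xY sX ps nblock]]].
have [rmain os] := uniq_walk_oriented (proj2 (andP ps)).
have [raux raux_descent] := exists_descent_rank (de (mutilate Gc A B)) S.
by exists rmain, raux; split; last exact: (lift_dconnected sz_gt1 raux_descent xY sX ps os nblock).
Qed.

Lemma regime_blowup_sizes (C : finType) (r : regime C) : regime_ok r ->
  exists2 sz : C -> nat, (forall c, 1 < sz c) & sizes_match r (@tag C (fun c => 'I_(sz c))).
Proof.
case: r => [_|sz sz_gt1]; first by exists (fun=> 2).
by exists sz => // c; rewrite card_blowup_cluster.
Qed.

Theorem theorem4 (C : finType) (Gc : mgraph C) (CX CY CZ CW : {set C}) (r : regime C) :
  is_CDMG Gc ->
  [disjoint CX & CY] -> [disjoint CX & CZ] -> [disjoint CX & CW] ->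
  [disjoint CY & CZ] -> [disjoint CY & CW] -> [disjoint CZ & CW] ->
  regime_ok r ->
  (* rule 1 *)
  (~ dsep (mutilate Gc CZ set0) (CZ :|: CW) CY CX ->
   exists (V : finType) (cl : V -> C) (G : mgraph V),
     [/\ compatible Gc cl G, sizes_match r cl &
      ~ dsep (mutilate G (clus cl CZ) set0)
             (clus cl CZ :|: clus cl CW) (clus cl CY) (clus cl CX)]) /\
  (* rule 2 *)
  (~ dsep (mutilate Gc CZ CX) (CZ :|: CW) CY CX ->
   exists (V : finType) (cl : V -> C) (G : mgraph V),
     [/\ compatible Gc cl G, sizes_match r cl &
      ~ dsep (mutilate G (clus cl CZ) (clus cl CX))
             (clus cl CZ :|: clus cl CW) (clus cl CY) (clus cl CX)]) /\
  (* rule 3 *)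
  (~ dsep (mutilate Gc (CZ :|: nonanc Gc CZ CX CW) set0) (CZ :|: CW) CY CX ->
   exists (V : finType) (cl : V -> C) (G : mgraph V),
     [/\ compatible Gc cl G, sizes_match r cl &
      ~ dsep (mutilate G (clus cl CZ :|: nonanc G (clus cl CZ) (clus cl CX) (clus cl CW)) set0)
             (clus cl CZ :|: clus cl CW) (clus cl CY) (clus cl CX)]).
Proof.
move=> /CDMG_bi_sym Gc_bi_sym _ dXZ dXW _ _ _ /regime_blowup_sizes [sz sz_gt1 sizes].
have compat rmain raux := blowup_compatible rmain raux Gc_bi_sym sz_gt1.
split; [|split] => /(blowup_dconnected sz_gt1) [rmain [raux [raux_descent dcon]]];
  exists _, tag, (blowup Gc sz rmain raux); split => //.
- by rewrite -clus_setU; rewrite clus_set0 in dcon.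
- by rewrite -clus_setU.
- by rewrite (nonanc_blowup sz_gt1) // -!clus_setU; rewrite clus_set0 in dcon.
Qed.
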